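(* Let $l,m,p,q\in\mathbb{N}$, $f\in\mathrm{Hom}_\Omega([l],[p])$, $g\in\mathrm{Hom}_\Omega([m],[q])$ and let $H\in G[l]$, $K\in G[m]$. Then, for $\varrho\in C(H)$, $\varsigma\in C(K)$, $(f\smile g)_{H\smile K*}(\varrho\smile\varsigma)=f_{H*}(\varrho)\smile g_{K*}(\varsigma)$.
   Context: $\Omega$ is the category of finite ordinals $[l]=\{0,\dots,l-1\}$ and all functions; for $f:[l]\to[p]$, $g:[m]\to[q]$, $f\smile g:[l+m]\to[p+q]$ is $f\smile g(i)=f(i)$ for $i\in[l]$ and $g(i-l)+p$ for $i\in[m]+l$. $G[l]$ is the set of hypergraphs on $[l]$ (sets of non empty subsets of $[l]$), $Gf(H)=\{f(X)\mid X\in H\}$, and $H\smile K=H\cup(K+l)$ with $K+l=\{X+l\mid X\in K\}$. Fix finite additive commutative monoids $\mathsf{A}$, $\mathsf{M}$. For finite $X\subset\mathbb{N}$, $\mathsf{A}^X$ is the monoid of functions $X\to\mathsf{A}$; for $f:X\to Y$, $f_\star(w)(s)=\sum_{r\in X,f(r)=s}w(r)$; for $\varpi:\mathsf{A}^X\to\mathsf{M}$, $f_*(\varpi)(v)=\sum_{w\in\mathsf{A}^X,f_\star(w)=v}\varpi(w)$. A calibration $\varrho\in C(H)$ assigns to each $X\in H$ a function $\varrho_X:\mathsf{A}^X\to\mathsf{M}$. For $f\in\mathrm{Hom}_\Omega([l],[m])$, $f_{H*}:C(H)\to C(Gf(H))$ is $f_{H*}(\varrho)_Y=\sum_{X\in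 H,f(X)=Y}f|_{X*}(\varrho_X)$. With $t_{Xl}(r)=r-l$ on $X\subset\mathbb{N}+l$, the calibration monadic product is $(\varrho\smile\varsigma)_X=\varrho_X$ for $X\in H$ and $\varsigma_{X-l}\circ t_{Xl\star}$ for $X\in K+l$. *)

From HB Require Import structures.
From mathcomp Require Import all_boot all_order all_algebra.
Set Implicit Arguments. Unset Strict Implicit. Unset Printing Implicit Defensive.
Import GRing.Theory.
Local Open Scope ring_scope.

(* Finite ordinal [l] is 'I_l; a subset X of [l] is a {set 'I_l};
   the elements of X form the finite type [elt X]. *)
Definition elt (l : nat) (X : {set 'I_l}) := {x : 'I_l | x \in X}.

Definition funs (A : finNmodType) (l : nat) (X : {set 'I_l}) :=
  {ffun elt X -> A}.

Definition hypergraph (l : nat) (H : {set {set 'I_l}}) : bool := set0 \notin H.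

Definition osmile (l m p q : nat) (f : 'I_l -> 'I_p) (g : 'I_m -> 'I_q)
  : 'I_(l + m) -> 'I_(p + q) :=
  fun i => match split i with
           | inl a => lshift q (f a)
           | inr b => rshift p (g b)
           end.

Definition Gmap (l p : nat) (f : 'I_l -> 'I_p) (H : {set {set 'I_l}})
  : {set {set 'I_p}} := [set f @: X | X : {set 'I_l} in H].

Definition Gsmile (l m : nat) (H : {set {set 'I_l}}) (K : {set {set 'I_m}})
  : {set {set 'I_(l + m)}} :=
  [set (@lshift l m) @: X | X : {set 'I_l} in H] :|: [set (@rshift l m) @: X | X : {set 'I_m} in K].

Section Calib.
Variables (A : finNmodType) (M : nmodType).

(* Pushforward of w : A^X along a map phi : X -> Y given by its graph on the
   underlying points:  phi_star(w)(s) = sum_{r in X, phi(r) = s} w(r). *)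
Definition fstar (a b : nat) (R : 'I_a -> 'I_b -> bool)
  (X : {set 'I_a}) (Y : {set 'I_b}) (w : funs A X) : funs A Y :=
  [ffun s : elt Y => \sum_(r : elt X | R (val r) (val s)) w r].
Arguments fstar {a b} R X Y w.

Definition fpush (a b : nat) (R : 'I_a -> 'I_b -> bool)
  (X : {set 'I_a}) (Y : {set 'I_b}) (varpi : funs A X -> M) : funs A Y -> M :=
  fun v => \sum_(w : funs A X | fstar R X Y w == v) varpi w.
Arguments fpush {a b} R X Y varpi v.

(* Calibrations: to each X a function A^X -> M (only the values at X in H
   are meaningful for a calibration of H). *)
Definition calib (l : nat) := forall X : {set 'I_l}, funs A X -> M.

Definition cpush (l p : nat) (f : 'I_l -> 'I_p) (H : {set {set 'I_l}})
  (rho : calib l) (Y : {set 'I_p}) (v : funs A Y) : M := \sum_(X in H | f @: X == Y)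
               fpush (fun i j => f i == j) X Y (rho X) v.
Arguments cpush {l p} f H rho Y v.

Definition csmile (l m : nat) (H : {set {set 'I_l}})
  (rho : calib l) (sigma : calib m) (X : {set 'I_(l + m)}) (w : funs A X) : M :=
    if X \in [set (@lshift l m) @: Y | Y : {set 'I_l} in H] then
      rho [set i : 'I_l | lshift m i \in X]
          (fstar (fun (r : 'I_(l + m)) (s : 'I_l) => val r == val s) X _ w)
    else
      sigma [set j : 'I_m | rshift l j \in X]
            (fstar (fun (r : 'I_(l + m)) (s : 'I_m) => (val r - l)%N == val s) X _ w).
Arguments csmile {l m} H rho sigma X w.

End Calib.

Arguments fstar {A a b} R X Y w.
Arguments fpush {A M a b} R X Y varpi v.
Arguments cpush {A M l p} f H rho Y v.
Arguments csmile {A M l m} H rho sigma X w.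

(* Every hyperedge of H ⌣ K lies in one of the two blocks [l] and [m] + l, and
   f ⌣ g maps them into the blocks [p] and [q] + p.  Since hyperedges are
   non-empty, no hyperedge of one block is sent onto the image of a hyperedge of
   the other, so at a hyperedge of, say, the left block the sum defining
   (f ⌣ g)_{H⌣K*} only runs over the shifted hyperedges of H.  Each summand is
   then the corresponding summand of f_{H*}(ρ) transported along the shifts, and
   pushforwards of A-valued functions commute with such relabellings of points. *)

From HB Require Import structures.
From mathcomp Require Import all_boot all_order all_algebra.
Set Implicit Arguments. Unset Strict Implicit. Unset Printing Implicit Defensive.

Definition rel_bij a b (E : 'I_a -> 'I_b -> bool) (X : {set 'I_a}) (Y : {set 'I_b}) :=
  [/\ forall r : elt X, exists s : elt Y, E (val r) (val s),
      forall s : elt Y, exists r : elt X, E (val r) (val s),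
      forall (r : elt X) (s1 s2 : elt Y), E (val r) (val s1) -> E (val r) (val s2) -> s1 = s2 &
      forall (r1 r2 : elt X) (s : elt Y), E (val r1) (val s) -> E (val r2) (val s) -> r1 = r2].

Lemma rel_bijT a b (E : 'I_a -> 'I_b -> bool) X Y :
  rel_bij E X Y -> rel_bij (fun j i => E i j) Y X.
Proof. by case=> ? ? func inj; split=> // r s1 s2; [apply: inj | apply: func]. Qed.

Lemma graph_inj (c d : nat) (G : 'I_c -> 'I_d -> bool) (h : 'I_d -> 'I_c) :
  (forall i j, G (h i) j = (i == j)) -> injective h.
Proof. by move=> G_h i j hij; apply/eqP; rewrite -G_h hij G_h. Qed.

Lemma imset_graph_eq n a (E : 'I_n -> 'I_a -> bool) (e : 'I_a -> 'I_n) (Z : {set 'I_a}) r i :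
  (forall i j, E (e i) j = (i == j)) -> r \in e @: Z -> E r i -> r = e i.
Proof. by move=> E_e /imsetP[z _ ->]; rewrite E_e => /eqP->. Qed.

Lemma rel_bij_imset n a (E : 'I_n -> 'I_a -> bool) (e : 'I_a -> 'I_n) (Z : {set 'I_a}) :
  (forall i j, E (e i) j = (i == j)) -> rel_bij E (e @: Z) Z.
Proof.
move=> E_e; split.
- by move=> [r /= /imsetP[z Zz ->]]; exists (exist _ z Zz); rewrite /= E_e.
- by move=> [z Zz]; exists (exist _ (e z) (imset_f e Zz)); rewrite /= E_e.
- move=> [r Zr] [s1 Zs1] [s2 Zs2] /= E1 E2; apply: val_inj => /=.
  by move: E2; rewrite (imset_graph_eq E_e Zr E1) E_e => /eqP.
- move=> [r1 Zr1] [r2 Zr2] s /= E1 E2; apply: val_inj => /=.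
  by rewrite (imset_graph_eq E_e Zr1 E1) (imset_graph_eq E_e Zr2 E2).
Qed.

Section Relabel.
Variables (A : finNmodType) (M : nmodType).

Lemma fstar_bij a b E (X : {set 'I_a}) (Y : {set 'I_b}) (w : funs A X) r s :
  rel_bij E X Y -> E (val r) (val s) -> fstar E X Y w s = w r.
Proof.
case=> _ _ _ inj Ers; rewrite ffunE (big_pred1 r) // => r' /=.
by apply/idP/eqP => [Er's | ->]; first exact: inj Er's Ers.
Qed.

Lemma fstarK a b E (X : {set 'I_a}) (Y : {set 'I_b}) :
  rel_bij E X Y -> cancel (fstar E X Y (A := A)) (fstar (fun j i => E i j) Y X).
Proof.
move=> bijE w; apply/ffunP => r; have [[total _ _ _] bijET] := (bijE, rel_bijT bijE).
have [s Ers] := total r.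
by rewrite (fstar_bij _ bijET Ers) (fstar_bij _ bijE Ers).
Qed.

Section Square.
Variables (a a' b b' : nat) (X' : {set 'I_a}) (X : {set 'I_a'}) (Y : {set 'I_b}) (Y' : {set 'I_b'}).
Variables (E : 'I_a -> 'I_a' -> bool) (E' : 'I_b -> 'I_b' -> bool).
Variables (R : 'I_a -> 'I_b -> bool) (S : 'I_a' -> 'I_b' -> bool).
Hypotheses (bijE : rel_bij E X' X) (bijE' : rel_bij E' Y Y').
Hypothesis RS : forall (r : elt X') (x : elt X) (y : elt Y) (t : elt Y'),
  E (val r) (val x) -> E' (val y) (val t) -> R (val r) (val y) = S (val x) (val t).

Lemma fstar_relabel (w : funs A X') :
  fstar E' Y Y' (fstar R X' Y w) = fstar S X Y' (fstar E X' X w).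
Proof.
have [[totalE _ funcE _] [_ surjE' _ _]] := (bijE, bijE').
apply/ffunP => t; have [y Eyt] := surjE' t.
rewrite (fstar_bij _ bijE' Eyt) !ffunE.
under [RHS]eq_bigr do rewrite ffunE.
rewrite (exchange_big_dep xpredT) //= big_mkcond /=.
apply: eq_bigr => r _; have [x Erx] := totalE r.
rewrite (RS Erx Eyt); case: ifP => Sxt.
  rewrite (big_pred1 x) // => x' /=.
  by apply/andP/eqP => [[_ Erx'] | ->]; first exact: funcE Erx' Erx.
rewrite big_pred0 // => x' /=; apply/andP => -[Sx't Erx'].
by move: Sx't; rewrite (funcE _ _ _ Erx' Erx) Sxt.
Qed.

Lemma fpush_relabel (phi : funs A X -> M) (w : funs A Y) :
  fpush R X' Y (phi \o fstar E X' X) w = fpush S X Y' phi (fstar E' Y Y' w).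
Proof.
rewrite /fpush (reindex (fstar E X' X)) /=; last first.
  exists (fstar (fun j i => E i j) X X') => u _; first exact: fstarK.
  exact: (fstarK (rel_bijT bijE)).
apply: eq_bigl => u; rewrite -fstar_relabel.
by rewrite (inj_eq (can_inj (fstarK bijE'))).
Qed.
End Square.
End Relabel.

Lemma imset_comm (a b c d : nat) (F : 'I_a -> 'I_b) (e : 'I_c -> 'I_a) (e' : 'I_d -> 'I_b) f
    (Z : {set 'I_c}) :
  (forall i, F (e i) = e' (f i)) -> F @: (e @: Z) = e' @: (f @: Z).
Proof. by move=> Fe; rewrite -!imset_comp; apply: eq_imset => i /=. Qed.

Section Block.
Variables (A : finNmodType) (M : nmodType).
Variables (n N a b : nat) (F : 'I_n -> 'I_N) (f : 'I_a -> 'I_b).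
Variables (e : 'I_a -> 'I_n) (e' : 'I_b -> 'I_N).
(* On the images of e and e', the relations E and E' are the graphs of the
   inverses of e and e'; this is how csmile shifts a hyperedge back to its block. *)
Variables (E : 'I_n -> 'I_a -> bool) (E' : 'I_N -> 'I_b -> bool).
Hypotheses (E_e : forall i j, E (e i) j = (i == j)) (E'_e' : forall i j, E' (e' i) j = (i == j)).
Hypothesis F_e : forall i, F (e i) = e' (f i).

Lemma cpush_block (H : {set {set 'I_a}}) (H' : {set {set 'I_n}}) (Y : {set 'I_b})
    (Rho : calib A M n) (rho : calib A M a) :
  {in H', forall X : {set 'I_n}, F @: X != e' @: Y} ->
  {in H, forall Z : {set 'I_a}, Rho (e @: Z) =1 rho Z \o fstar E (e @: Z) Z} ->
  cpush F ([set e @: Z | Z : {set 'I_a} in H] :|: H') Rho (e' @: Y)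
  =1 cpush f H rho Y \o fstar E' (e' @: Y) Y.
Proof.
move=> H'_off Rho_e w; rewrite /cpush /=.
have e_inj := graph_inj E_e; have e'_inj := graph_inj E'_e'.
rewrite (eq_bigl [in [set e @: Z | Z : {set 'I_a} in [set Z in H | f @: Z == Y]]]); last first.
  move=> X /=; apply/andP/imsetP => [[/setUP[/imsetP[Z HZ ->] | H'X] FXY] | [Z]].
  - exists Z => //; rewrite inE HZ.
    by rewrite (imset_comm _ F_e) (inj_eq (imset_inj e'_inj)) in FXY.
  - by rewrite (negbTE (H'_off X H'X)) in FXY.
  rewrite inE => /andP[HZ /eqP fZY] ->; split; first by rewrite inE imset_f.
  by rewrite (imset_comm _ F_e) fZY.
rewrite big_imset /=; last by move=> Z1 Z2 _ _; apply: imset_inj.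
apply: eq_big => [Z | Z]; first by rewrite inE.
rewrite inE => /andP[HZ _]; rewrite {1}/fpush; under eq_bigr do rewrite Rho_e //.
apply: (fpush_relabel (rel_bij_imset Z E_e) (rel_bij_imset Y E'_e')).
move=> [r Zr] [x Zx] [y Yy] [t Yt] /= Erx Eyt.
by rewrite (imset_graph_eq E_e Zr Erx) (imset_graph_eq E'_e' Yy Eyt) F_e (inj_eq e'_inj).
Qed.
End Block.

Lemma imset_lshift_neq_rshift p q (Y : {set 'I_p}) (Z : {set 'I_q}) :
  Y != set0 -> lshift q @: Y != @rshift p q @: Z.
Proof.
case/set0Pn => y Yy; apply/eqP => YZ.
have /imsetP[z _ /eqP] : lshift q y \in @rshift p q @: Z by rewrite -YZ imset_f.
by rewrite eq_lrshift.
Qed.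

Lemma imset_rshift_neq_lshift p q (Y : {set 'I_p}) (Z : {set 'I_q}) :
  Z != set0 -> @rshift p q @: Z != lshift q @: Y.
Proof.
case/set0Pn => z Zz; apply/eqP => ZY.
have /imsetP[y _ /eqP] : @rshift p q z \in lshift q @: Y by rewrite -ZY imset_f.
by rewrite eq_rlshift.
Qed.

Lemma hyperedge_neq0 l (H : {set {set 'I_l}}) X : hypergraph H -> X \in H -> X != set0.
Proof. by move=> hH HX; apply: contraNneq hH => <-. Qed.

Lemma osmile_lshift l m p q (f : 'I_l -> 'I_p) (g : 'I_m -> 'I_q) i :
  osmile f g (lshift m i) = lshift q (f i).
Proof. by rewrite /osmile -[lshift m i]/(unsplit (inl i)) unsplitK. Qed.

Lemma osmile_rshift l m p q (f : 'I_l -> 'I_p) (g : 'I_m -> 'I_q) i :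
  osmile f g (rshift l i) = rshift p (g i).
Proof. by rewrite /osmile -[rshift l i]/(unsplit (inr i)) unsplitK. Qed.

Lemma csmile_lshift (A : finNmodType) (M : nmodType) l m (H : {set {set 'I_l}})
    (rho : calib A M l) (sigma : calib A M m) (X : {set 'I_l}) :
  X \in H ->
  csmile H rho sigma (lshift m @: X)
  =1 rho X \o fstar (fun (r : 'I_(l + m)) (s : 'I_l) => val r == val s) (lshift m @: X) X.
Proof.
move=> HX w; rewrite /csmile imset_f //.
have -> // : [set i | lshift m i \in lshift m @: X] = X.
by apply/setP => i; rewrite inE mem_imset //; apply: lshift_inj.
Qed.

Lemma csmile_rshift (A : finNmodType) (M : nmodType) l m (H : {set {set 'I_l}})
    (rho : calib A M l) (sigma : calib A M m) (X : {set 'I_m}) :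
  X != set0 ->
  csmile H rho sigma (@rshift l m @: X)
  =1 sigma X \o fstar (fun (r : 'I_(l + m)) (s : 'I_m) => val r - l == val s) (@rshift l m @: X) X.
Proof.
move=> X0 w; rewrite /csmile ifF; last first.
  by apply/imsetP => -[Y _ /eqP]; apply/negP; apply: imset_rshift_neq_lshift.
have -> // : [set j | rshift l j \in @rshift l m @: X] = X.
by apply/setP => j; rewrite inE mem_imset //; apply: rshift_inj.
Qed.

Theorem proposition3p24 (A : finNmodType) (M : finNmodType)
  (l m p q : nat) (f : 'I_l -> 'I_p) (g : 'I_m -> 'I_q)
  (H : {set {set 'I_l}}) (K : {set {set 'I_m}})
  (hH : hypergraph H) (hK : hypergraph K)
  (rho : calib A M l) (sigma : calib A M m) :
  forall Y : {set 'I_(p + q)},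
    Y \in Gmap (osmile f g) (Gsmile H K) ->
    cpush (osmile f g) (Gsmile H K) (csmile H rho sigma) Y
    =1 csmile (Gmap f H) (cpush f H rho) (cpush g K sigma) Y.
Proof.
move=> _ /imsetP[_ /setUP[] /imsetP[Z HZ ->] ->].
- rewrite (imset_comm _ (osmile_lshift f g)) => w.
  rewrite csmile_lshift ?imset_f //.
  apply: (cpush_block (E := fun r (s : 'I_l) => val r == val s)
                      (E' := fun r (s : 'I_p) => val r == val s)) => //.
  - exact: osmile_lshift.
  - move=> _ /imsetP[Z' KZ' ->]; rewrite (imset_comm _ (osmile_rshift f g)).
    by rewrite imset_rshift_neq_lshift // imset_eq0 (hyperedge_neq0 hK).
  - by move=> Z' HZ'; apply: csmile_lshift.
- rewrite (imset_comm _ (osmile_rshift f g)) => w.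
  rewrite csmile_rshift ?imset_eq0 ?(hyperedge_neq0 hK) // /Gsmile setUC.
  apply: (cpush_block (E := fun r (s : 'I_m) => val r - l == val s)
                      (E' := fun r (s : 'I_q) => val r - p == val s)) => /=.
  - by move=> i j; rewrite addKn.
  - by move=> i j; rewrite addKn.
  - exact: osmile_rshift.
  - move=> _ /imsetP[Z' HZ' ->]; rewrite (imset_comm _ (osmile_lshift f g)).
    by rewrite imset_lshift_neq_rshift // imset_eq0 (hyperedge_neq0 hH).
  - by move=> Z' KZ'; apply: csmile_rshift (hyperedge_neq0 hK KZ').
Qed.
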